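(* Let $p$ be a prime and $G$ a $p$-group containing a normal abelian subgroup $A$ of finite index. Assume that $A$ contains a $G$-invariant subgroup $C$ such that $A/C$ is a divisible Chernikov group. If $G$ has no proper contranormal subgroups, then $[G,A]\le C$.
   Context: A subgroup $H$ of $G$ is contranormal in $G$ if its normal closure $H^G$ equals $G$; it is proper if $H\ne G$. *)

(* Possibly infinite groups are not
   available in MathComp, so an abstract group is given as a record with its
   operations and axioms; subgroups are predicates on the carrier. *)
From mathcomp Require Import all_boot.
From Stdlib Require List.

Set Implicit Arguments.
Unset Strict Implicit.
Unset Printing Implicit Defensive.

Record group := Group {
  gcar :> Type;
  gmul : gcar -> gcar -> gcar;
  ginv : gcar -> gcar;
  gone : gcar;
  gmulA : forall x y z, gmul x (gmul y z) = gmul (gmul x y) z;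
  gmul1l : forall x, gmul gone x = x;
  gmulVl : forall x, gmul (ginv x) x = gone }.

Section GroupDefs.
Variable G : group.
Local Notation "x * y" := (gmul x y).
Local Notation "x ^-1" := (ginv x).
Local Notation "1" := (gone G).

Fixpoint gpow (x : G) (n : nat) : G :=
  match n with 0 => 1 | S m => gpow x m * x end.

Definition subgroup (H : G -> Prop) : Prop :=
  [/\ H 1, (forall x y, H x -> H y -> H (x * y)) & (forall x, H x -> H (x^-1))].

Definition normal (H : G -> Prop) : Prop :=
  subgroup H /\ forall x g, H x -> H (g^-1 * x * g).

Definition abelian_sub (H : G -> Prop) : Prop :=
  forall x y, H x -> H y -> x * y = y * x.

Definition finite_index (H : G -> Prop) : Prop :=
  exists s : list G, forall g, exists t, List.In t s /\ H (t^-1 * g).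

Definition p_group (p : nat) : Prop :=
  forall x : G, exists n, gpow x (p ^ n) = 1.

Definition gen (S : G -> Prop) (x : G) : Prop :=
  forall K, subgroup K -> (forall y, S y -> K y) -> K x.

Definition normal_closure (H : G -> Prop) (x : G) : Prop :=
  forall N, normal N -> (forall y, H y -> N y) -> N x.

Definition contranormal (H : G -> Prop) : Prop :=
  subgroup H /\ forall x, normal_closure H x.

Definition proper (H : G -> Prop) : Prop := exists g, ~ H g.

Definition no_proper_contranormal : Prop :=
  forall H, contranormal H -> ~ proper H.

Definition comm (g a : G) : G := g^-1 * a^-1 * g * a.

(* generators of [G, A] *)
Definition comm_set (A : G -> Prop) (x : G) : Prop :=
  exists g a, A a /\ x = comm g a.

Definition quasicyclic_sub (P : G -> Prop) : Prop :=
  subgroup P /\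
  exists q, prime q /\ exists x : nat -> G,
    [/\ forall n, P (x n), x 0 <> 1, gpow (x 0) q = 1,
        (forall n, gpow (x n.+1) q = x n) &
        (forall y, P y -> exists n m, y = gpow (x n) m)].

Fixpoint gprod (xs : nat -> G) (k : nat) : G :=
  match k with 0 => 1 | S m => gprod xs m * xs m end.

Definition direct_product (D : G -> Prop) (k : nat) (P : nat -> G -> Prop) : Prop :=
  [/\ (forall i, i < k -> subgroup (P i)),
      (forall i j x y, i < k -> j < k -> i <> j -> P i x -> P j y -> x * y = y * x),
      (forall x, D x <-> exists xs : nat -> G,
                    (forall i, i < k -> P i (xs i)) /\ x = gprod xs k) &
      (forall xs : nat -> G, (forall i, i < k -> P i (xs i)) ->
                    gprod xs k = 1 -> forall i, i < k -> xs i = 1)].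

Definition chernikov : Prop :=
  exists D : G -> Prop, normal D /\ finite_index D /\
  exists k (P : nat -> G -> Prop),
    (forall i, i < k -> quasicyclic_sub (P i)) /\ direct_product D k P.

Definition divisible : Prop :=
  forall (y : G) n, 0 < n -> exists z, gpow z n = y.

End GroupDefs.

(* A/C (C normal in A, C <= A) is a divisible Chernikov group: A/C is
   isomorphic to a group Q that is divisible and Chernikov, i.e. there is
   a homomorphism from A onto Q with kernel exactly C. *)
Definition quotient_divisible_chernikov (G : group) (A C : G -> Prop) : Prop :=
  exists (Q : group) (f : G -> Q),
    [/\ (forall a b, A a -> A b -> f (gmul a b) = gmul (f a) (f b)),
        (forall y : Q, exists a, A a /\ f a = y),
        (forall a, A a -> (f a = gone Q <-> C a)),
        divisible Q & chernikov Q].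

(* [G] acts by conjugation on the abelian group [Q = A/C], [A] acting
   trivially; the claim is that this action is trivial.  Let [t] be a left
   transversal of [A] with [m] elements.  For an [m]-th root [r] of [q], the
   norm [\prod_i r^(t_i)] is [G]-fixed and differs from [q] by the product of
   the [r^(t_i) r^-1]; so [Q = Z [Q, G]] with [Z] the fixed points, and [[Q, G]]
   lies in the image of every normal subgroup containing [t].  Let [W = Z Q_E],
   [Q_E] the elements of order dividing [p^E], with [E] so large that [W]
   contains the finitely many values [f (t_k^-1 t_i t_j)].  Then
   [H = \bigcup_k t_k f^-1(W)] is closed under products, hence a subgroup as
   [G] is a p-group, and its normal closure contains [t], [f^-1(Z)] and the
   preimage of [[Q, G]], i.e. is [G].  So [H = G] and [W = Q], and by
   divisibility [Q = Q^(p^E) = Z^(p^E)] is fixed. *)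

From HB Require Import structures.
From mathcomp Require Import all_boot.
From Stdlib Require Import Classical ClassicalEpsilon.
From Stdlib Require List.

Set Implicit Arguments.
Unset Strict Implicit.
Unset Printing Implicit Defensive.

Local Notation "x * y" := (gmul x y).
Local Notation "x ^-1" := (ginv x).
Local Notation "1" := (gone _).

Section GroupTheory.
Variable G : group.
Implicit Types (x y z g u v : G) (H N : G -> Prop).

Lemma gmulVr x : x * x^-1 = 1.
Proof.
rewrite -[x * _]gmul1l -(gmulVl x^-1) -gmulA (gmulA x^-1) gmulVl gmul1l.
by rewrite gmulVl.
Qed.

Lemma gmul1r x : x * 1 = x.
Proof. by rewrite -(gmulVl x) gmulA gmulVr gmul1l. Qed.

Lemma gmulKl x y : x^-1 * (x * y) = y.
Proof. by rewrite gmulA gmulVl gmul1l. Qed.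

Lemma gmulKVl x y : x * (x^-1 * y) = y.
Proof. by rewrite gmulA gmulVr gmul1l. Qed.

Lemma gmulKr x y : y * x * x^-1 = y.
Proof. by rewrite -gmulA gmulVr gmul1r. Qed.

Lemma gmulKVr x y : y * x^-1 * x = y.
Proof. by rewrite -gmulA gmulVl gmul1r. Qed.

Lemma gmulI x y z : x * y = x * z -> y = z.
Proof. by move=> e; rewrite -(gmulKl x y) e gmulKl. Qed.

Lemma ginv_unique x y : x * y = 1 -> x = y^-1.
Proof. by move=> e; rewrite -(gmulKr y x) e gmul1l. Qed.

Lemma ginvK x : x^-1^-1 = x.
Proof. by symmetry; apply: ginv_unique; rewrite gmulVr. Qed.

Lemma ginvM x y : (x * y)^-1 = y^-1 * x^-1.
Proof. by symmetry; apply: ginv_unique; rewrite gmulA gmulKVr gmulVl. Qed.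

Lemma ginv1 : (1 : G)^-1 = 1.
Proof. by symmetry; apply: ginv_unique; rewrite gmul1l. Qed.

Lemma gpowC x n : x * gpow x n = gpow x n * x.
Proof. by elim: n => [|n IH] /=; rewrite ?gmul1l ?gmul1r // gmulA IH. Qed.

Lemma gpowD x m n : gpow x (m + n) = gpow x m * gpow x n.
Proof. by elim: n => [|n IH]; rewrite ?addn0 ?gmul1r // addnS /= IH gmulA. Qed.

Lemma gpowM x m n : gpow x (m * n)%N = gpow (gpow x m) n.
Proof. by elim: n => [|n IH]; rewrite ?muln0 // mulnS addnC gpowD IH. Qed.

Lemma gpow1n n : gpow (1 : G) n = 1.
Proof. by elim: n => [|n IH] //=; rewrite IH gmul1l. Qed.

Lemma gpowV x n : gpow x^-1 n = (gpow x n)^-1.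
Proof. by elim: n => [|n IH] /=; rewrite ?ginv1 // IH -ginvM gpowC. Qed.

Lemma subgroup1 H : subgroup H -> H 1.
Proof. by case. Qed.

Lemma subgroupM H x y : subgroup H -> H x -> H y -> H (x * y).
Proof. by case=> _ HM _; apply: HM. Qed.

Lemma subgroupV H x : subgroup H -> H x -> H x^-1.
Proof. by case=> _ _ HV; apply: HV. Qed.

Lemma normalJ N g x : normal N -> N x -> N (g^-1 * x * g).
Proof. by case=> _ NJ; apply: NJ. Qed.

Lemma normalJ_iff N g x : normal N -> N (g^-1 * x * g) <-> N x.
Proof.
move=> nN; split=> [|]; last exact: normalJ.
by move/(normalJ (g^-1) nN); rewrite ginvK !gmulA gmulKr gmulVr gmul1l.
Qed.

Lemma same_left_coset H u v y :
  subgroup H -> H (y^-1 * u) -> H (y^-1 * v) -> H (u^-1 * v).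
Proof.
move=> sH Hu Hv; have := subgroupM sH (subgroupV sH Hu) Hv.
by rewrite ginvM ginvK gmulA gmulKr.
Qed.

(* In a p-group x^-1 is a positive power of x. *)
Lemma p_group_subgroup p H : 0 < p -> p_group G p ->
  (exists x, H x) -> (forall x y, H x -> H y -> H (x * y)) -> subgroup H.
Proof.
move=> p_gt0 pG [x0 Hx0] HM.
have Hpow x n : H x -> H (gpow x n.+1).
  by move=> Hx; elim: n => [|n IH]; rewrite /= ?gmul1l //; apply: HM.
have pn_gt0 n : 0 < p ^ n by rewrite expn_gt0 p_gt0.
have H1 : H 1.
  have [n xn] := pG x0; have := Hpow x0 (p ^ n).-1 Hx0.
  by rewrite prednK // xn.
split=> // x Hx; have [n xn] := pG x.
have -> : x^-1 = gpow x (p ^ n).-1.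
  by symmetry; apply: ginv_unique; change (gpow x (p ^ n).-1.+1 = 1); rewrite prednK.
by case: (p ^ n).-1 => [|k] //; apply: Hpow.
Qed.

Lemma subgroup_coset_rep H u a : subgroup H -> H (u^-1 * a) -> H a -> H u.
Proof.
move=> sH Hua Ha; have := subgroupV sH (subgroupM sH Hua (subgroupV sH Ha)).
by rewrite gmulKr ginvK.
Qed.

Definition left_transversal H m (t : 'I_m -> G) :=
  (forall g, exists i, H ((t i)^-1 * g)) /\ (forall i j, H ((t i)^-1 * t j) -> i = j).

Lemma list_transversal H (s : list G) : subgroup H ->
  exists m (t : 'I_m -> G), (forall x, List.In x s -> exists i, H ((t i)^-1 * x)) /\
                           (forall i j, H ((t i)^-1 * t j) -> i = j).
Proof.
move=> sH; elim: s => [|x s [m [t [cov distinct]]]].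
  by exists 0, (fun i => 1); split=> [|[]].
case: (classic (exists i, H ((t i)^-1 * x))) => [x_cov|x_new].
  by exists m, t; split=> // y [<-|/cov].
pose t' (i : 'I_m.+1) := if unlift ord_max i is Some j then t j else x.
have t'_max : t' ord_max = x by rewrite /t' unlift_none.
have t'_lift j : t' (lift ord_max j) = t j by rewrite /t' liftK.
have swap u v : H (u^-1 * v) -> H (v^-1 * u).
  by move/(subgroupV sH); rewrite ginvM ginvK.
exists m.+1, t'; split.
  move=> y [<-|/cov [j Hj]]; last by exists (lift ord_max j); rewrite t'_lift.
  by exists ord_max; rewrite t'_max gmulVl; apply: subgroup1.
move=> i j.
case: (unliftP ord_max i) => [i' ->|->]; case: (unliftP ord_max j) => [j' ->|->];
  rewrite ?t'_max ?t'_lift //.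
- by move/distinct ->.
- by move=> Hx; case: x_new; exists i'.
- by move/swap=> Hx; case: x_new; exists j'.
Qed.

Lemma finite_index_transversal H : subgroup H -> finite_index H ->
  exists m (t : 'I_m -> G), left_transversal H t.
Proof.
move=> sH [s cov_s]; have [m [t [cov distinct]]] := list_transversal s sH.
exists m, t; split=> // g.
have [x [sx Hxg]] := cov_s g; have [i Hix] := cov x sx.
by exists i; have := subgroupM sH Hix Hxg; rewrite -gmulA gmulKVl.
Qed.

End GroupTheory.

Section ConjugationAction.
Variables (G Q : group) (A : G -> Prop) (f : G -> Q).
Hypotheses (nA : normal A) (abA : abelian_sub A).
Hypothesis fM : forall a b, A a -> A b -> f (a * b) = f a * f b.
Hypothesis f_onto : forall q, exists a, A a /\ f a = q.
Hypothesis f_kerJ : forall g a, A a -> f a = 1 -> f (g^-1 * a * g) = 1.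
Implicit Types (g x y a b c : G) (q r : Q).

Let sA : subgroup A := nA.1.
Let A1 : A 1 := subgroup1 sA.
Let AM a b : A a -> A b -> A (a * b). Proof. exact: subgroupM. Qed.
Let AV a : A a -> A a^-1. Proof. exact: subgroupV. Qed.
Let AJ g a : A a -> A (g^-1 * a * g). Proof. exact: normalJ. Qed.
Local Hint Resolve A1 AM AV AJ : core.

Lemma f1 : f 1 = 1.
Proof. by apply: (@gmulI _ (f 1)); rewrite -fM // gmul1l gmul1r. Qed.

Lemma fV a : A a -> f a^-1 = (f a)^-1.
Proof. by move=> Aa; apply: ginv_unique; rewrite -fM ?gmulVl ?f1; auto. Qed.

Lemma fpow a n : A a -> f (gpow a n) = gpow (f a) n.
Proof.
move=> Aa; elim: n => [|n IH] /=; first exact: f1.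
rewrite fM ?IH //; elim: n {IH} => [|n IH] //=; auto.
Qed.

Lemma gmulQC : commutative (@gmul Q).
Proof.
move=> x y; have [a [Aa <-]] := f_onto x; have [b [Ab <-]] := f_onto y.
by rewrite -!fM // abA.
Qed.

HB.instance Definition _ :=
  Monoid.isComLaw.Build Q 1 (@gmul Q) (@gmulA Q) gmulQC (@gmul1l Q).

Lemma gpowMn q r n : gpow (q * r) n = gpow q n * gpow r n.
Proof. by elim: n => [|n IH] /=; rewrite ?gmul1l // IH Monoid.mulmACA. Qed.

Lemma big_const_gpow n q : \big[@gmul Q/1]_(i < n) q = gpow q n.
Proof. by elim: n => [|n IH]; rewrite ?big_ord0 // big_ord_recr IH. Qed.

Definition pick q : G := proj1_sig (constructive_indefinite_description _ (f_onto q)).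

Lemma pick_spec q : A (pick q) /\ f (pick q) = q.
Proof. by rewrite /pick; case: constructive_indefinite_description. Qed.

Lemma f_conj_eq g a b : A a -> A b -> f a = f b -> f (g^-1 * a * g) = f (g^-1 * b * g).
Proof.
move=> Aa Ab fab.
have Aab : A (a^-1 * b) by auto.
have fab1 : f (a^-1 * b) = 1 by rewrite fM ?fV ?fab ?gmulVl; auto.
have -> : g^-1 * b * g = (g^-1 * a * g) * (g^-1 * (a^-1 * b) * g).
  by rewrite !gmulA !gmulKr.
by rewrite [RHS]fM ?(f_kerJ g Aab fab1) ?gmul1r; auto.
Qed.

Definition act g q := f (g^-1 * pick q * g).

Lemma actE g a : A a -> act g (f a) = f (g^-1 * a * g).
Proof. by move=> Aa; have [Ab fb] := pick_spec (f a); apply: f_conj_eq. Qed.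

Lemma act_mul g q r : act g (q * r) = act g q * act g r.
Proof.
have [a [Aa <-]] := f_onto q; have [b [Ab <-]] := f_onto r.
rewrite -fM // !actE -?fM; auto.
by congr f; rewrite !gmulA gmulKr.
Qed.

Lemma act1 g : act g 1 = 1.
Proof. by rewrite -f1 actE // gmul1r gmulVl. Qed.

Lemma act_pow g q n : act g (gpow q n) = gpow (act g q) n.
Proof. by elim: n => [|n IH] /=; rewrite ?act1 // act_mul IH. Qed.

Lemma act_comp g h q : act (g * h) q = act h (act g q).
Proof.
have [a [Aa <-]] := f_onto q.
by rewrite !actE ?ginvM ?gmulA; auto.
Qed.

Lemma act_A b q : A b -> act b q = q.
Proof.
move=> Ab; have [a [Aa <-]] := f_onto q.
by rewrite actE // -gmulA -(abA Ab Aa) gmulKl.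
Qed.

Lemma act_coset u y q : A (u^-1 * y) -> act y q = act u q.
Proof. by move=> Auy; rewrite -[y](gmulKVl u) act_comp act_A. Qed.

Lemma f_comm g a : A a -> f (comm g a) = act g (f a^-1) * f a.
Proof. by move=> Aa; rewrite /comm fM ?actE; auto. Qed.

Lemma act_div_image N g q : normal N -> N g ->
  exists b, [/\ A b, N b & act g q = f b * q].
Proof.
move=> nN Ng; have [Ac fc] := pick_spec q.
rewrite /act; set c := pick q in Ac fc *.
exists (g^-1 * c * g * c^-1); split.
- by auto.
- have -> : g^-1 * c * g * c^-1 = g^-1 * (c^-1^-1 * g * c^-1) by rewrite ginvK !gmulA.
  exact: subgroupM nN.1 (subgroupV nN.1 Ng) (normalJ _ nN Ng).
- by rewrite [f (_ * c^-1)]fM ?fV ?fc ?gmulKVr; auto.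
Qed.

Definition fixed q := forall g, act g q = q.

Section Transfer.
Variables (m : nat) (t : 'I_m -> G).
Hypotheses (tA : left_transversal A t) (Qd : divisible Q).

Lemma transversal_perm x : exists rho : 'I_m -> 'I_m,
  injective rho /\ forall i, A ((t (rho i))^-1 * (t i * x)).
Proof.
have [cov distinct] := tA.
pose rho i := proj1_sig (constructive_indefinite_description _ (cov (t i * x))).
have rhoP i : A ((t (rho i))^-1 * (t i * x)).
  by rewrite /rho; case: constructive_indefinite_description.
exists rho; split=> // i j eq_ij; apply: distinct.
have : A ((t i * x)^-1 * (t j * x)).
  by apply: (same_left_coset sA (rhoP i)); rewrite eq_ij.
have -> : (t i * x)^-1 * (t j * x) = x^-1 * ((t i)^-1 * t j) * x by rewrite ginvM !gmulA.
by move/(normalJ_iff _ _ nA).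
Qed.

Definition orbit_prod r := \big[@gmul Q/1]_(i < m) act (t i) r.

Lemma orbit_prod_fixed r : fixed (orbit_prod r).
Proof.
move=> x; have [rho [rho_inj rhoP]] := transversal_perm x.
rewrite /orbit_prod (big_morph (act x) (act_mul x) (act1 x)) [RHS](reindex_inj rho_inj).
by apply: eq_bigr => i _; rewrite -act_comp (act_coset _ (rhoP i)).
Qed.

(* The norm [orbit_prod r] equals [r ^ m] up to a product of the elements
   [act (t i) r / r], which lie in the image of any normal subgroup containing [t]. *)
Lemma fixed_mul_image N : normal N -> (forall i, N (t i)) ->
  forall q, exists z b, [/\ fixed z, A b, N b & q = z * f b].
Proof.
move=> nN Nt q; have [i0 _] := tA.1 1.
have [r rq] := Qd q (leq_ltn_trans (leq0n i0) (ltn_ord i0)).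
pose imN k := exists b, [/\ A b, N b & f b = k].
have [b [Ab Nb fb]] : imN (\big[@gmul Q/1]_(i < m) (act (t i) r * r^-1)).
  apply: big_ind => [|_ _ [b [Ab Nb <-]] [b' [Ab' Nb' <-]] | i _].
  - by exists 1; split=> //; [exact: subgroup1 nN.1 | exact: f1].
  - by exists (b * b'); split; [auto | exact: subgroupM nN.1 Nb Nb' | exact: fM].
  - have [b [Ab Nb ->]] := act_div_image r nN (Nt i).
    by exists b; rewrite gmulKr.
have orbit_prodE : orbit_prod r = f b * q.
  rewrite /orbit_prod fb -rq -big_const_gpow -big_split.
  by apply: eq_bigr => i _; symmetry; apply: gmulKVr.
exists (orbit_prod r), b^-1; split; auto; first exact: orbit_prod_fixed.
- exact: subgroupV nN.1 Nb.
- by rewrite orbit_prodE fV // (gmulQC (f b)) gmulKr.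
Qed.

End Transfer.

Section BoundedExponent.
Variable p : nat.
Hypothesis pG : p_group G p.

Definition bounded E q := gpow q (p ^ E) = 1.

Lemma bounded_mono E E' q : E <= E' -> bounded E q -> bounded E' q.
Proof. by move=> /subnKC <- qE; rewrite /bounded expnD gpowM qE gpow1n. Qed.

Lemma bounded_mul E q r : bounded E q -> bounded E r -> bounded E (q * r).
Proof. by rewrite /bounded gpowMn => -> ->; rewrite gmul1l. Qed.

Lemma bounded_inv E q : bounded E q -> bounded E q^-1.
Proof. by rewrite /bounded gpowV => ->; rewrite ginv1. Qed.

Lemma bounded_act E g q : bounded E q -> bounded E (act g q).
Proof. by rewrite /bounded -act_pow => ->; rewrite act1. Qed.

Lemma bounded_finType (T : finType) (F : T -> Q) : exists E, forall i, bounded E (F i).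
Proof.
have e q : {E | bounded E q}.
  apply: constructive_indefinite_description.
  have [a [Aa <-]] := f_onto q; have [n an] := pG a.
  by exists n; rewrite /bounded -fpow // an f1.
exists (\max_(i : T) sval (e (F i))) => i.
exact: bounded_mono (leq_bigmax i) (svalP (e (F i))).
Qed.

End BoundedExponent.

Section ContranormalSubgroup.
Variables (p m E : nat) (t : 'I_m -> G).
Hypotheses (p_gt0 : 0 < p) (pG : p_group G p).
Hypotheses (tA : left_transversal A t) (Qd : divisible Q).
(* [(t k)^-1 * (t i * t j)] is the [A]-part of [t i * t j] when [t k] represents
   its coset; bounding these values makes [H] below closed under products. *)
Hypothesis t_bounded : forall i j k, bounded p E (f ((t k)^-1 * (t i * t j))).

Definition W q := exists z u, [/\ fixed z, bounded p E u & q = z * u].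

Lemma W_mul q r : W q -> W r -> W (q * r).
Proof.
move=> [z [u [zf uE ->]]] [z' [u' [zf' uE' ->]]].
exists (z * z'), (u * u'); split; [|exact: bounded_mul | exact: Monoid.mulmACA].
by move=> g; rewrite act_mul zf zf'.
Qed.

Lemma W_act g q : W q -> W (act g q).
Proof.
move=> [z [u [zf uE ->]]]; exists z, (act g u).
by split; [| exact: bounded_act | rewrite act_mul zf].
Qed.

Lemma W_fixed z : fixed z -> W z.
Proof. by exists z, 1; split; rewrite /bounded ?gpow1n ?gmul1r. Qed.

Lemma W_bounded u : bounded p E u -> W u.
Proof. by exists 1, u; split; rewrite ?gmul1l //; apply: act1. Qed.

Lemma f_transversal_bounded k : bounded p E (f (t k)).
Proof. by have := t_bounded k k k; rewrite gmulKl. Qed.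

(* [H] is the union of the cosets [t k * (A :&: f^-1(W))]. *)
Definition H x := forall k, A ((t k)^-1 * x) -> W (f ((t k)^-1 * x)).

Lemma H_transversal i : H (t i).
Proof. by move=> k /tA.2 ->; rewrite gmulVl f1; apply: W_fixed; apply: act1. Qed.

Lemma H_of_W a : A a -> W (f a) -> H a.
Proof.
move=> Aa Wa k Aka; have Atk := subgroup_coset_rep sA Aka Aa.
rewrite fM ?fV //; auto.
exact: W_mul (W_bounded (bounded_inv (f_transversal_bounded k))) Wa.
Qed.

Lemma W_of_H a : A a -> H a -> W (f a).
Proof.
move=> Aa Ha; have [k Aka] := tA.1 a; have Atk := subgroup_coset_rep sA Aka Aa.
rewrite -(gmulKVl (t k) a) fM //.
exact: W_mul (W_bounded (f_transversal_bounded k)) (Ha k Aka).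
Qed.

Lemma H_mul x y : H x -> H y -> H (x * y).
Proof.
move=> Hx Hy k Axy; have [i Aa] := tA.1 x; have [j Ab] := tA.1 y.
set a := (t i)^-1 * x in Aa Hx; set b := (t j)^-1 * y in Ab Hy.
set c := (t k)^-1 * (t i * t j).
have e : (t k)^-1 * (x * y) = c * ((t j)^-1 * a * t j * b).
  by rewrite /c /a /b !gmulA !gmulKr.
have Aw : A ((t j)^-1 * a * t j * b) by auto.
have Ac : A c by have := AM Axy (AV Aw); rewrite e gmulKr.
rewrite e (fM Ac) ?(fM (AJ _ Aa) Ab) -?actE; auto.
exact: W_mul (W_bounded (t_bounded i j k)) (W_mul (W_act (t j) (Hx i Aa)) (Hy j Ab)).
Qed.

Lemma H_contranormal : contranormal H.
Proof.
have [i0 _] := tA.1 1.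
split=> [|x N nN HN].
  exact: p_group_subgroup p_gt0 pG (ex_intro H _ (@H_transversal i0)) H_mul.
have Nt i : N (t i) by apply: HN; apply: H_transversal.
have [i Aa] := tA.1 x; set a := (t i)^-1 * x in Aa.
have [z [b [zf Ab Nb fab]]] := fixed_mul_image tA Qd nN Nt (f a).
have Nab : N (a * b^-1).
  apply: HN; apply: H_of_W; first by auto.
  by rewrite fM ?fV ?fab ?gmulKr; auto; apply: W_fixed.
rewrite -(gmulKVl (t i) x) -/a -(gmulKVr b a).
exact: subgroupM nN.1 (Nt i) (subgroupM nN.1 Nab Nb).
Qed.

Lemma fixed_of_W_full : (forall q, W q) -> forall q, fixed q.
Proof.
move=> Wq q g; have pE_gt0 : 0 < p ^ E by rewrite expn_gt0 p_gt0.
have [r <-] := Qd q pE_gt0.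
have [z [u [zf uE ->]]] := Wq r.
by rewrite gpowMn uE gmul1r act_pow zf.
Qed.

End ContranormalSubgroup.

Lemma act_trivial p : 0 < p -> p_group G p -> divisible Q -> finite_index A ->
  no_proper_contranormal G -> forall q, fixed q.
Proof.
move=> p_gt0 pG Qd fiA noCN.
have [m [t tA]] := finite_index_transversal sA fiA.
have [E tE] := bounded_finType pG (fun ijk : 'I_m * 'I_m * 'I_m =>
  let: (i, j, k) := ijk in f ((t k)^-1 * (t i * t j))).
have t_bounded i j k := tE (i, j, k).
have H_full x : H p E t x.
  apply: NNPP => Hx.
  exact: noCN _ (H_contranormal p_gt0 pG tA Qd t_bounded) (ex_intro _ x Hx).
apply: (fixed_of_W_full (E := E) p_gt0 Qd) => q; have [a [Aa <-]] := f_onto q.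
exact (W_of_H tA t_bounded Aa (H_full a)).
Qed.

End ConjugationAction.

Unset Implicit Arguments.

Theorem lemma2p6 (p : nat) (G : group) (A C : G -> Prop) :
  prime p -> p_group G p ->
  normal A -> abelian_sub A -> finite_index A ->
  normal C -> (forall c, C c -> A c) ->
  quotient_divisible_chernikov A C ->
  no_proper_contranormal G ->
  forall x, gen (comm_set A) x -> C x.
Proof.
move=> p_pr pG nA abA fiA nC CA [Q [f [fM f_onto fK Qd _]]] noCN x.
have f_kerJ g a : A a -> f a = 1 -> f (g^-1 * a * g) = 1.
  by move=> Aa /(fK _ Aa) Ca; apply/fK; apply: normalJ; auto.
have Q_fixed := act_trivial nA abA fM f_onto f_kerJ (prime_gt0 p_pr) pG Qd fiA noCN.
apply; first exact: nC.1.
move=> _ [g [a [Aa ->]]].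
have Aa' : A a^-1 := subgroupV nA.1 Aa.
apply/(fK _ (subgroupM nA.1 (normalJ g nA Aa') Aa)).
rewrite f_comm // Q_fixed -fM // gmulVl.
by apply/(fK _ (subgroup1 nA.1)); apply: subgroup1 nC.1.
Qed.
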